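(* Let $0\le\alpha\le\beta$ and let $q=(q_n)$, $q_n\in(0,1)$, satisfy $st-\lim_n q_n=1$, $st-\lim_n q_n^n=a$ $(a<1)$ and $st-\lim_n 1/[n]_{q_n}=0$. Then for every bounded continuous function $f$ on $[0,\infty)$, $$st-\lim_{n\to\infty}\ \big\|\mathfrak{D}_n^{(\alpha,\beta)}(f;q_n;\cdot)-f\big\|_{\rho_0}=0,$$ where $\|g\|_{\rho_0}=\sup_{x\in[0,\infty)}\frac{|g(x)|}{1+x^2}$.
   Context: $q$-calculus notation, for $0<q<1$: $[n]_q=\frac{1-q^n}{1-q}$; $[k]_q!=[k]_q[k-1]_q\cdots[1]_q$ with $[0]_q!=1$; $\left[\begin{array}{c}n\\k\end{array}\right]_q=\frac{[n]_q!}{[k]_q!\,[n-k]_q!}$; $(1+x)_q^m=(1+x)(1+qx)\cdots(1+q^{m-1}x)$ with $(1+x)_q^0=1$. The $q$-exponential is $E_q(z)=\sum_{k=0}^\infty q^{k(k-1)/2}\frac{z^k}{[k]_q!}=\prod_{j=0}^\infty(1+(1-q)q^jz)$. The $q$-Jackson integral is $\int_0^a g(t)\,d_qt=(1-q)a\sum_{j=0}^\infty g(aq^j)q^j$. For $n\in\mathbb N$, $0<q<1$, $x\in[0,\infty)$ define $p^q_{n,k}(x)=\left[\begin{array}{c}n+k-1\\k\end{array}\right]_q q^{k(k-1)/2}\frac{x^k}{(1+x)_q^{n+k}}$ and $s^q_{n,k}(t)=E_q(-[n]_qt)\frac{([n]_qt)^k}{[k]_q!}$. The $q$-Baskakov–Szász–Stancu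 operators with parameters $0\le\alpha\le\beta$ are $$\mathfrak{D}_n^{(\alpha,\beta)}(f;q;x)=[n]_q\sum_{k=0}^\infty p^q_{n,k}(x)\int_0^{q/(1-q^n)} q^{-k-1}s^q_{n,k}(t)\, f\!\left(\frac{[n]_q t q^{-k}+\alpha}{[n]_q+\beta}\right)d_qt .$$ With $q=q_n$, $[n]_q$ means $[n]_{q_n}$. Statistical convergence: for $K\subseteq\mathbb N$, its natural density is $\delta(K)=\lim_n \frac1n|\{j\le n: j\in K\}|$ (if it exists). A real sequence $(x_j)$ is statistically convergent to $L$, written $st-\lim_n x_n=L$, if for every $\epsilon>0$, $\delta(\{j:|x_j-L|\ge\epsilon\})=0$. *)

From Stdlib Require Import Reals Lra Classical ClassicalDescription ClassicalEpsilon.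
Open Scope R_scope.

(** Value of a real series: its sum if it converges, 0 otherwise
    (all series used below converge under the hypotheses of the paper). *)
Definition series_val (u : nat -> R) : R :=
  match excluded_middle_informative (exists l, infinite_sum u l) with
  | left H => proj1_sig (constructive_indefinite_description _ H)
  | right _ => 0
  end.

Definition qint (q : R) (n : nat) : R := (1 - q ^ n) / (1 - q).

Fixpoint qfact (q : R) (k : nat) : R :=
  match k with
  | O => 1
  | S k' => qint q (S k') * qfact q k'
  end.

Definition qbinom (q : R) (n k : nat) : R :=
  qfact q n / (qfact q k * qfact q (n - k)).

Fixpoint qpoch_plus (q x : R) (m : nat) : R :=
  match m with
  | O => 1
  | S m' => qpoch_plus q x m' * (1 + q ^ m' * x)
  end.

Definition qtri (q : R) (k : nat) : R := q ^ (Nat.div (k * (k - 1)) 2).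

Definition Eq_exp (q z : R) : R :=
  series_val (fun k => qtri q k * z ^ k / qfact q k).

Definition jackson (q a : R) (g : R -> R) : R :=
  (1 - q) * a * series_val (fun j => g (a * q ^ j) * q ^ j).

Definition p_q (q : R) (n k : nat) (x : R) : R :=
  qbinom q (n + k - 1) k * qtri q k * x ^ k / qpoch_plus q x (n + k).

Definition s_q (q : R) (n k : nat) (t : R) : R :=
  Eq_exp q (- (qint q n) * t) * (qint q n * t) ^ k / qfact q k.

Definition D_op (alpha beta : R) (f : R -> R) (q : R) (n : nat) (x : R) : R :=
  qint q n *
  series_val (fun k =>
    p_q q n k x *
    jackson q (q / (1 - q ^ n))
      (fun t => / q ^ (k + 1) * s_q q n k t *
                f ((qint q n * t / q ^ k + alpha) / (qint q n + beta)))).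

Definition indic (P : Prop) : R :=
  if excluded_middle_informative P then 1 else 0.

(** Natural density of K ⊆ ℕ (indices j = 1..n) equals 0. *)
Definition density_zero (K : nat -> Prop) : Prop :=
  Un_cv (fun n => sum_f_R0 (fun j => indic (K (S j))) (pred n) / INR n) 0.

Definition st_cv (x : nat -> R) (L : R) : Prop :=
  forall eps, eps > 0 -> density_zero (fun j => Rabs (x j - L) >= eps).

Definition rho0_norm_lt (g : R -> R) (eps : R) : Prop :=
  exists c, c < eps /\ forall x, 0 <= x -> Rabs (g x) / (1 + x ^ 2) <= c.

Definition bounded_cont_nonneg (f : R -> R) : Prop :=
  (exists M, forall x, 0 <= x -> Rabs (f x) <= M) /\
  (forall x, 0 <= x -> limit1_in f (fun y => 0 <= y) (f x) x).

(* Fix Q = q_n in (0, 1) and write N = [n]_Q.  Evaluating the Jackson integral, the operator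
   becomes a double weighted mean
     D f(x) = sum_k p_k(x) sum_j W_k(j) f(v_kj),   v_kj = (Q^(j+1) / ((1-Q) Q^k) + alpha) / (N + beta),
   with W_k(j) proportional to Q^((k+1) j) E_Q(-Q^(j+1)/(1-Q)).  The functional equation
   E_Q(z) = (1 + (1-Q) z) E_Q(Q z) makes the generating function of these E_Q values equal to
   (Q;Q)_k at Q^(k+1), so each W_k is a probability with explicit first and second moments; the
   q-Baskakov basis p_k(x) telescopes to 1 and has explicit q-factorial moments as well.  Hence
   D reproduces constants and its second central moment is at most C (1 + x^2) / N for Q >= 1/2.
   For bounded uniformly continuous f this gives |D f(x) - f(x)| <= eps/4 + b C (1 + x^2) / N on
   [0, B] and |D f(x) - f(x)| <= 2 sup|f| <= eps x / 4 beyond B, so the rho_0-norm is below eps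
   as soon as |q_n - 1| < 1/2 and 1/[n]_{q_n} is small: off a union of two sets of density 0. *)

From Stdlib Require Import Reals Lra Lia ClassicalDescription ClassicalEpsilon.
From Coquelicot Require Import Coquelicot.
Open Scope R_scope.

(** * Real series *)

Lemma series_val_of_is_series (u : nat -> R) (l : R) : is_series u l -> series_val u = l.
Proof.
  intros Hu. unfold series_val.
  destruct (excluded_middle_informative (exists l0, infinite_sum u l0)) as [Hex|Hnex].
  - destruct (constructive_indefinite_description _ Hex) as [l' Hl']; simpl.
    apply is_series_Reals in Hl'.
    now rewrite <- (is_series_unique u l' Hl'), (is_series_unique u l Hu).
  - exfalso. apply Hnex. exists l. now apply is_series_Reals.
Qed.

Lemma is_series_Rplus (a b : nat -> R) la lb :
  is_series a la -> is_series b lb -> is_series (fun n => a n + b n) (la + lb).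
Proof. exact (is_series_plus a b la lb). Qed.

Lemma is_series_Rscal (c : R) (a : nat -> R) la :
  is_series a la -> is_series (fun n => c * a n) (c * la).
Proof. exact (is_series_scal c a la). Qed.

Lemma is_series_Rext (a b : nat -> R) l :
  (forall n, a n = b n) -> is_series a l -> is_series b l.
Proof. exact (is_series_ext a b l). Qed.

Lemma is_series_le (a b : nat -> R) la lb :
  is_series a la -> is_series b lb -> (forall n, a n <= b n) -> la <= lb.
Proof.
  intros Ha Hb Hab. apply (is_lim_seq_le (sum_n a) (sum_n b) la lb); [|exact Ha|exact Hb].
  intros N. rewrite !sum_n_Reals. apply sum_Rle. intros; apply Hab.
Qed.

Lemma is_series_abs_le (a b : nat -> R) la lb :
  is_series a la -> is_series b lb -> (forall n, Rabs (a n) <= b n) -> Rabs la <= lb.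
Proof.
  intros Ha Hb Hab. apply Rabs_le. split.
  - enough ((-1) * lb <= la) by lra.
    apply (is_series_le _ _ _ _ (is_series_Rscal (-1) _ _ Hb) Ha).
    intros n. specialize (Hab n). apply Rabs_le_between in Hab. lra.
  - apply (is_series_le _ _ _ _ Ha Hb).
    intros n. specialize (Hab n). apply Rabs_le_between in Hab. lra.
Qed.

Lemma is_series_of_partial_sums (a : nat -> R) (l : R) :
  is_lim_seq (fun N => sum_f_R0 a N) l -> is_series a l.
Proof.
  intros Hl. apply (is_lim_seq_ext _ (sum_n a)) in Hl; [exact Hl|].
  intros N. now rewrite sum_n_Reals.
Qed.

Lemma is_series_of_tail (a : nat -> R) l :
  is_series (fun k => a (S k)) (l - a O) -> is_series a l.
Proof.
  intros Hl. apply is_series_decr_1.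
  replace (plus l (opp (a O))) with (l - a O) by reflexivity. exact Hl.
Qed.

Lemma is_series_tail (a : nat -> R) (l : R) :
  is_series a l -> is_series (fun k => a (S k)) (l - a O).
Proof.
  intros Hl. apply is_series_incr_1.
  unfold plus; simpl. replace (l - a O + a O) with l by ring. exact Hl.
Qed.

Lemma ex_series_mul_bounded (w g : nat -> R) (M : R) :
  (forall j, 0 <= w j) -> ex_series w -> (forall j, Rabs (g j) <= M) ->
  ex_series (fun j => w j * g j).
Proof.
  intros Hw Hex Hg. apply (@ex_series_le R_AbsRing R_CompleteNormedModule _ (fun j => M * w j)).
  - intros j. unfold norm; simpl. rewrite Rabs_mult, (Rabs_pos_eq (w j)) by apply Hw.
    rewrite Rmult_comm. apply Rmult_le_compat_r; [apply Hw|apply Hg].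
  - destruct Hex as [l Hl]. exists (M * l). now apply is_series_Rscal.
Qed.

Lemma weighted_mean_dev_le (w g c : nat -> R) (G C y a b : R) :
  (forall j, 0 <= w j) -> is_series w 1 ->
  is_series (fun j => w j * g j) G -> is_series (fun j => w j * c j) C ->
  (forall j, Rabs (g j - y) <= a + b * c j) ->
  Rabs (G - y) <= a + b * C.
Proof.
  intros Hw H1 HG HC Hdev.
  replace (G - y) with (G + - y * 1) by ring.
  replace (a + b * C) with (a * 1 + b * C) by ring.
  apply (is_series_abs_le (fun j => w j * g j + - y * w j) (fun j => a * w j + b * (w j * c j))).
  - apply is_series_Rplus; [exact HG|]. now apply is_series_Rscal.
  - apply is_series_Rplus; now apply is_series_Rscal.
  - intros j. replace (w j * g j + - y * w j) with (w j * (g j - y)) by ring.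
    replace (a * w j + b * (w j * c j)) with (w j * (a + b * c j)) by ring.
    rewrite Rabs_mult, (Rabs_pos_eq (w j)) by apply Hw.
    apply Rmult_le_compat_l; [apply Hw|apply Hdev].
Qed.

(** * q-integers, q-factorials and q-Pochhammer symbols *)

Lemma pow_le_1 x n : 0 <= x <= 1 -> x ^ n <= 1.
Proof.
  intros Hx. induction n as [|n IH]; simpl; [lra|].
  assert (0 <= x ^ n) by (apply pow_le; lra). nra.
Qed.

Lemma pow_le_base x n : 0 <= x <= 1 -> (1 <= n)%nat -> x ^ n <= x.
Proof.
  intros Hx Hn. destruct n as [|n]; [lia|]. simpl.
  assert (x ^ n <= 1) by (apply pow_le_1; lra).
  assert (0 <= x ^ n) by (apply pow_le; lra). nra.
Qed.

Lemma qint_0 q : qint q 0 = 0.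
Proof. unfold qint; simpl. unfold Rdiv. ring. Qed.

Lemma qint_1 q : q <> 1 -> qint q 1 = 1.
Proof. intros Hq. unfold qint; simpl. field. lra. Qed.

Lemma qint_S q k : q <> 1 -> qint q (S k) = 1 + q * qint q k.
Proof. intros Hq. unfold qint; simpl. field. lra. Qed.

Lemma qint_ge_1 q k : 0 < q < 1 -> (1 <= k)%nat -> 1 <= qint q k.
Proof.
  intros Hq Hk. unfold qint. apply Rcomplements.Rle_div_r; [lra|].
  assert (q ^ k <= q) by (apply pow_le_base; [lra|exact Hk]). lra.
Qed.

Lemma qfact_S q k : qfact q (S k) = qint q (S k) * qfact q k.
Proof. reflexivity. Qed.

Lemma qfact_ge_1 q k : 0 < q < 1 -> 1 <= qfact q k.
Proof.
  intros Hq. induction k as [|k IH]; simpl; [lra|].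
  assert (1 <= qint q (S k)) by (apply qint_ge_1; [lra|lia]). nra.
Qed.

Lemma qfact_pos q k : 0 < q < 1 -> 0 < qfact q k.
Proof. intros Hq. pose proof (qfact_ge_1 q k Hq). lra. Qed.

Lemma qtri_S q k : qtri q (S k) = qtri q k * q ^ k.
Proof.
  unfold qtri. rewrite <- pow_add. f_equal.
  destruct k as [|k]; [reflexivity|].
  replace (S (S k) * (S (S k) - 1))%nat with (S k * (S k - 1) + S k * 2)%nat by (simpl; lia).
  rewrite Nat.div_add by lia. reflexivity.
Qed.

Lemma qtri_pos q k : 0 < q -> 0 < qtri q k.
Proof. intros Hq. unfold qtri. apply pow_lt; lra. Qed.

Lemma qtri_le_1 q k : 0 < q < 1 -> qtri q k <= 1.
Proof. intros Hq. unfold qtri. apply pow_le_1; lra. Qed.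

Lemma qpoch_plus_S q x m : qpoch_plus q x (S m) = qpoch_plus q x m * (1 + q ^ m * x).
Proof. reflexivity. Qed.

Lemma qpoch_plus_ge_1 q x m : 0 < q -> 0 <= x -> 1 <= qpoch_plus q x m.
Proof.
  intros Hq Hx. induction m as [|m IH]; simpl; [lra|].
  assert (0 <= q ^ m * x) by (apply Rmult_le_pos; [apply pow_le|]; lra). nra.
Qed.

Lemma qpoch_plus_pos q x m : 0 < q -> 0 <= x -> 0 < qpoch_plus q x m.
Proof. intros Hq Hx. pose proof (qpoch_plus_ge_1 q x m Hq Hx). lra. Qed.

(* [qfact q k * (1 - q) ^ k] is the q-Pochhammer symbol (q;q)_k = (1-q)...(1-q^k). *)
Lemma qfact_pochhammer_S q k : q <> 1 ->
  qfact q (S k) * (1 - q) ^ S k = qfact q k * (1 - q) ^ k * (1 - q ^ S k).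
Proof. intros Hq. rewrite qfact_S. unfold qint. simpl. field. lra. Qed.

Lemma qfact_pochhammer_nonneg q k : 0 < q < 1 -> 0 <= qfact q k * (1 - q) ^ k.
Proof.
  intros Hq. apply Rmult_le_pos; [apply Rlt_le, qfact_pos; lra|apply pow_le; lra].
Qed.

Lemma qfact_pochhammer_le q k i : 0 < q < 1 ->
  qfact q (k + i) * (1 - q) ^ (k + i) <= qfact q k * (1 - q) ^ k.
Proof.
  intros Hq. induction i as [|i IH]; [rewrite Nat.add_0_r; lra|].
  rewrite Nat.add_succ_r, qfact_pochhammer_S by lra.
  pose proof (qfact_pochhammer_nonneg q (k + i) Hq).
  assert (0 < q ^ S (k + i)) by (apply pow_lt; lra). nra.
Qed.

Lemma qfact_pochhammer_le_1 q k : 0 < q < 1 -> qfact q k * (1 - q) ^ k <= 1.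
Proof.
  intros Hq. pose proof (qfact_pochhammer_le q 0 k Hq) as Hle. simpl in Hle. lra.
Qed.

Lemma qfact_ratio_le q k i : 0 < q < 1 -> qfact q (k + i) / qfact q k <= / (1 - q) ^ i.
Proof.
  intros Hq. pose proof (qfact_pochhammer_le q k i Hq) as Hle. rewrite pow_add in Hle.
  assert (0 < qfact q k) by (apply qfact_pos; lra).
  assert (0 < (1 - q) ^ k) by (apply pow_lt; lra).
  assert (0 < (1 - q) ^ i) by (apply pow_lt; lra).
  apply (Rmult_le_reg_r ((1 - q) ^ i * (qfact q k * (1 - q) ^ k))).
  { apply Rmult_lt_0_compat; [|apply Rmult_lt_0_compat]; assumption. }
  replace (/ (1 - q) ^ i * ((1 - q) ^ i * (qfact q k * (1 - q) ^ k)))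
    with (qfact q k * (1 - q) ^ k) by (field; lra).
  replace (qfact q (k + i) / qfact q k * ((1 - q) ^ i * (qfact q k * (1 - q) ^ k)))
    with (qfact q (k + i) * ((1 - q) ^ k * (1 - q) ^ i)) by (field; lra).
  exact Hle.
Qed.

(** * The q-exponential *)

Definition qexp_term (q z : R) (k : nat) : R := qtri q k * z ^ k / qfact q k.

Lemma qexp_term_0 q z : qexp_term q z 0 = 1.
Proof. unfold qexp_term, qtri. simpl. field. Qed.

Lemma qexp_term_S q z k : 0 < q < 1 ->
  qexp_term q z (S k) = qexp_term q z k * (q ^ k * z / qint q (S k)).
Proof.
  intros Hq. unfold qexp_term. rewrite qtri_S, qfact_S. simpl.
  assert (0 < qfact q k) by (apply qfact_pos; lra).
  assert (1 <= qint q (S k)) by (apply qint_ge_1; [lra|lia]).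
  field. lra.
Qed.

Lemma qexp_term_neq_0 q z k : 0 < q < 1 -> z <> 0 -> qexp_term q z k <> 0.
Proof.
  intros Hq Hz. unfold qexp_term.
  assert (0 < qtri q k) by (apply qtri_pos; lra).
  assert (0 < qfact q k) by (apply qfact_pos; lra).
  assert (z ^ k <> 0) by (apply pow_nonzero; exact Hz).
  apply Rmult_integral_contrapositive_currified; [|apply Rinv_neq_0_compat; lra].
  apply Rmult_integral_contrapositive_currified; lra.
Qed.

(* D'Alembert: the ratio of consecutive terms is at most [q ^ k |z| -> 0]. *)
Lemma ex_series_qexp_term q z : 0 < q < 1 -> ex_series (qexp_term q z).
Proof.
  intros Hq. destruct (Req_dec z 0) as [->|Hz].
  - apply ex_series_incr_1. apply (ex_series_ext (fun _ => 0)).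
    + intros k. unfold qexp_term. simpl. unfold Rdiv. ring.
    + exists 0. apply is_series_of_partial_sums, (is_lim_seq_ext (fun _ => 0)).
      * intros N. induction N as [|N IH]; simpl; lra.
      * apply is_lim_seq_const.
  - apply ex_series_Rabs, (ex_series_DAlembert _ 0); [lra|intros k; now apply qexp_term_neq_0|].
    apply (is_lim_seq_le_le (fun _ => 0) _ (fun k => Rabs z * q ^ k)).
    + intros k. split; [apply Rabs_pos|].
      pose proof (qexp_term_neq_0 q z k Hq Hz).
      assert (1 <= qint q (S k)) by (apply qint_ge_1; [lra|lia]).
      rewrite qexp_term_S by exact Hq.
      replace (qexp_term q z k * (q ^ k * z / qint q (S k)) / qexp_term q z k)
        with (q ^ k * z / qint q (S k)) by (field; split; lra).
      assert (0 < q ^ k) by (apply pow_lt; lra).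
      unfold Rdiv. rewrite !Rabs_mult, Rabs_inv, (Rabs_pos_eq (q ^ k)),
        (Rabs_pos_eq (qint q (S k))) by lra.
      assert (0 < / qint q (S k) <= 1).
      { split; [apply Rinv_0_lt_compat; lra|rewrite <- Rinv_1; apply Rinv_le_contravar; lra]. }
      assert (0 <= q ^ k * Rabs z) by (pose proof (Rabs_pos z); nra).
      nra.
    + apply is_lim_seq_const.
    + replace (Finite 0) with (Rbar_mult (Rabs z) 0) by (simpl; f_equal; ring).
      apply is_lim_seq_scal_l, is_lim_seq_geom. rewrite Rabs_pos_eq; lra.
Qed.

Lemma Eq_exp_correct q z : 0 < q < 1 -> is_series (qexp_term q z) (Eq_exp q z).
Proof.
  intros Hq. pose proof (Series_correct _ (ex_series_qexp_term q z Hq)) as HS.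
  replace (Eq_exp q z) with (Series (qexp_term q z)); [exact HS|].
  symmetry. exact (series_val_of_is_series _ _ HS).
Qed.

Lemma Eq_exp_functional_eq q z : 0 < q < 1 ->
  Eq_exp q z = (1 + (1 - q) * z) * Eq_exp q (q * z).
Proof.
  intros Hq.
  pose proof (Eq_exp_correct q z Hq) as HA. pose proof (Eq_exp_correct q (q * z) Hq) as HB.
  assert (Hdiff : is_series (fun k => qexp_term q z k + (-1) * qexp_term q (q * z) k)
                    ((1 - q) * z * Eq_exp q (q * z))).
  { apply is_series_of_tail. rewrite !qexp_term_0.
    replace ((1 - q) * z * Eq_exp q (q * z) - (1 + -1 * 1)) with ((1 - q) * z * Eq_exp q (q * z)) by ring.
    apply (is_series_Rext (fun k => (1 - q) * z * qexp_term q (q * z) k)); [|now apply is_series_Rscal].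
    intros k. unfold qexp_term. rewrite !qtri_S, qfact_S. unfold qint.
    assert (0 < qfact q k) by (apply qfact_pos; lra).
    assert (0 < 1 - q ^ S k) by (pose proof (pow_le_base q (S k) ltac:(lra) ltac:(lia)); lra).
    rewrite !Rpow_mult_distr. simpl. simpl in *. field. lra. }
  assert (Hsum : is_series (fun k => qexp_term q z k + (-1) * qexp_term q (q * z) k)
                   (Eq_exp q z + (-1) * Eq_exp q (q * z))).
  { apply is_series_Rplus; [|apply is_series_Rscal]; assumption. }
  pose proof (is_series_unique _ _ Hsum). pose proof (is_series_unique _ _ Hdiff). lra.
Qed.

Lemma Eq_exp_near_0 q z : 0 < q < 1 -> Rabs z <= / 2 -> Rabs (Eq_exp q z - 1) <= 2 * Rabs z.
Proof.
  intros Hq Hz. pose proof (Rabs_pos z).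
  pose proof (is_series_tail _ _ (Eq_exp_correct q z Hq)) as Htail. rewrite qexp_term_0 in Htail.
  assert (Hgeom : is_series (fun k => Rabs z * Rabs z ^ k) (Rabs z * / (1 - Rabs z))).
  { apply is_series_Rscal, is_series_geom. rewrite Rabs_Rabsolu. lra. }
  apply Rle_trans with (Rabs z * / (1 - Rabs z)).
  - apply (is_series_abs_le _ _ _ _ Htail Hgeom). intros k. unfold qexp_term.
    assert (0 < qtri q (S k) <= 1) by (split; [apply qtri_pos|apply qtri_le_1]; lra).
    assert (1 <= qfact q (S k)) by (apply qfact_ge_1; lra).
    assert (0 <= Rabs z ^ k) by (apply pow_le, Rabs_pos).
    unfold Rdiv. rewrite !Rabs_mult, Rabs_inv, <- RPow_abs,
      (Rabs_pos_eq (qtri q (S k))), (Rabs_pos_eq (qfact q (S k))) by lra.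
    simpl pow.
    assert (0 < / qfact q (S k) <= 1).
    { split; [apply Rinv_0_lt_compat; lra|rewrite <- Rinv_1; apply Rinv_le_contravar; lra]. }
    assert (0 <= Rabs z * Rabs z ^ k) by nra.
    assert (0 <= qtri q (S k) * (Rabs z * Rabs z ^ k) <= Rabs z * Rabs z ^ k) by (split; nra).
    nra.
  - apply (Rmult_le_reg_r (1 - Rabs z)); [lra|].
    replace (Rabs z * / (1 - Rabs z) * (1 - Rabs z)) with (Rabs z) by (field; lra). nra.
Qed.

(** * The q-exponential at the Jackson nodes *)

Section QExpNodes.
Variable Q : R.
Hypothesis HQ : 0 < Q < 1.

(* [node j = [n]_Q * (Q / (1 - Q^n)) * Q^j]: the j-th node of the Jackson integral in the
   operator, scaled by [n]_Q; it does not depend on n. *)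
Definition node (j : nat) : R := Q ^ S j / (1 - Q).
Definition enode (j : nat) : R := Eq_exp Q (- node j).

Lemma node_pos j : 0 < node j.
Proof. unfold node. apply Rdiv_lt_0_compat; [apply pow_lt|]; lra. Qed.

Lemma enode_step j : enode j = (1 - Q ^ S j) * enode (S j).
Proof.
  unfold enode. rewrite (Eq_exp_functional_eq Q (- node j)) by exact HQ.
  unfold node. f_equal; [|f_equal]; simpl; field; lra.
Qed.

Lemma enode_cvg_1 : is_lim_seq enode 1.
Proof.
  assert (Hnode : is_lim_seq node 0).
  { apply (is_lim_seq_ext (fun j => (Q / (1 - Q)) * Q ^ j)); [intros j; unfold node; simpl; field; lra|].
    replace (Finite 0) with (Rbar_mult (Q / (1 - Q)) 0) by (simpl; f_equal; ring).
    apply is_lim_seq_scal_l, is_lim_seq_geom. rewrite Rabs_pos_eq; lra. }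
  apply is_lim_seq_Reals in Hnode. apply is_lim_seq_Reals. intros eps Heps.
  destruct (Hnode (Rmin (/ 2) (eps / 4))) as [N HN]; [apply Rmin_pos; lra|].
  exists N. intros j Hj. specialize (HN j Hj). unfold R_dist in *. rewrite Rminus_0_r in HN.
  pose proof (Rmin_l (/ 2) (eps / 4)). pose proof (Rmin_r (/ 2) (eps / 4)).
  assert (Hsmall : Rabs (- node j) <= / 2) by (rewrite Rabs_Ropp; lra).
  pose proof (Eq_exp_near_0 Q (- node j) HQ Hsmall) as Hnear. rewrite Rabs_Ropp in Hnear.
  unfold enode. lra.
Qed.

(* [enode_step] propagates the sign of [enode j] to all later terms, which tend to 1. *)
Lemma enode_pos j : 0 < enode j.
Proof.
  destruct (Rlt_or_le 0 (enode j)) as [Hpos|Hnpos]; [exact Hpos|exfalso].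
  assert (Hall : forall m, enode (j + m) <= 0).
  { induction m as [|m IH]; [rewrite Nat.add_0_r; exact Hnpos|].
    rewrite Nat.add_succ_r. pose proof (enode_step (j + m)).
    assert (Q ^ S (j + m) <= Q) by (apply pow_le_base; [lra|lia]). nra. }
  pose proof enode_cvg_1 as Hlim. apply is_lim_seq_Reals in Hlim.
  destruct (Hlim (/ 2)) as [N HN]; [lra|].
  specialize (HN (j + N)%nat ltac:(lia)). specialize (Hall N).
  unfold R_dist in HN. apply Rabs_def2 in HN. lra.
Qed.

Lemma enode_le_succ j : enode j <= enode (S j).
Proof.
  rewrite (enode_step j) at 1. pose proof (enode_pos (S j)).
  assert (0 < Q ^ S j) by (apply pow_lt; lra). nra.
Qed.

Lemma enode_le_1 j : enode j <= 1.
Proof.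
  destruct (Rle_or_lt (enode j) 1) as [Hle|Hgt]; [exact Hle|exfalso].
  assert (Hall : forall m, enode j <= enode (j + m)).
  { induction m as [|m IH]; [rewrite Nat.add_0_r; lra|].
    rewrite Nat.add_succ_r. pose proof (enode_le_succ (j + m)). lra. }
  pose proof enode_cvg_1 as Hlim. apply is_lim_seq_Reals in Hlim.
  destruct (Hlim (enode j - 1)) as [N HN]; [lra|].
  specialize (HN (j + N)%nat ltac:(lia)). specialize (Hall N).
  unfold R_dist in HN. apply Rabs_def2 in HN. lra.
Qed.

Lemma ex_series_geom_mul_enode r (g : nat -> nat) : 0 <= r < 1 ->
  ex_series (fun j => r ^ j * enode (g j)).
Proof.
  intros Hr. apply (ex_series_mul_bounded _ _ 1).
  - intros j. apply pow_le; lra.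
  - apply ex_series_geom. rewrite Rabs_pos_eq; lra.
  - intros j. pose proof (enode_pos (g j)). pose proof (enode_le_1 (g j)).
    rewrite Rabs_pos_eq; lra.
Qed.

(* The generating function of the [enode j]; [enode_gf_pow] is the q-analogue of
   [int_0^oo t^k e^(-t) dt = k!] that makes the Szasz part a probability. *)
Definition enode_gf (r : R) : R := Series (fun j => r ^ j * enode j).

Lemma enode_gf_correct r : 0 <= r < 1 -> is_series (fun j => r ^ j * enode j) (enode_gf r).
Proof. intros Hr. exact (Series_correct _ (ex_series_geom_mul_enode r (fun j => j) Hr)). Qed.

Lemma enode_gf_shift r : 0 <= r < 1 ->
  enode_gf r = enode 0 + r * Series (fun j => r ^ j * enode (S j)).
Proof.
  intros Hr.
  pose proof (is_series_tail _ _ (enode_gf_correct r Hr)) as Htail.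
  pose proof (is_series_Rscal r _ _ (Series_correct _ (ex_series_geom_mul_enode r S Hr))) as Hscal.
  assert (E : forall j, r * (r ^ j * enode (S j)) = r ^ S j * enode (S j)) by (intros j; simpl; ring).
  apply (is_series_Rext _ _ _ E) in Hscal.
  pose proof (is_series_unique _ _ Htail). pose proof (is_series_unique _ _ Hscal).
  simpl in *. lra.
Qed.

Lemma enode_gf_mul_Q r : 0 < r < 1 -> enode_gf (r * Q) = (1 - r) * enode_gf r.
Proof.
  intros Hr.
  assert (Hr1 : 0 <= r < 1) by lra. assert (HrQ : 0 <= r * Q < 1) by nra.
  set (X := Series (fun j => r ^ j * enode (S j))).
  set (Y := Series (fun j => (r * Q) ^ j * enode (S j))).
  pose proof (enode_gf_shift r Hr1) as E1. pose proof (enode_gf_shift (r * Q) HrQ) as E2.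
  fold X in E1. fold Y in E2.
  assert (E3 : enode_gf r = X - Q * Y).
  { apply is_series_unique.
    apply (is_series_Rext (fun j => r ^ j * enode (S j) + (- Q) * ((r * Q) ^ j * enode (S j)))).
    - intros j. rewrite (enode_step j), Rpow_mult_distr. simpl. ring.
    - replace (X - Q * Y) with (X + (- Q) * Y) by ring.
      apply is_series_Rplus; [|apply is_series_Rscal];
        apply Series_correct, ex_series_geom_mul_enode; assumption. }
  rewrite E2. enough (r * enode_gf r = r * X - r * Q * Y) by lra.
  rewrite E3. ring.
Qed.

Lemma enode_gf_Q : enode_gf Q = 1.
Proof.
  assert (Htelescope : is_series (fun j => enode j - enode (S j)) (enode 0 - 1)).
  { apply is_series_of_partial_sums.
    apply (is_lim_seq_ext (fun N => enode 0 - enode (S N))).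
    - intros N. induction N as [|N IH]; simpl; [ring|]. rewrite <- IH. ring.
    - apply is_lim_seq_minus'; [apply is_lim_seq_const|].
      exact (proj1 (is_lim_seq_incr_1 enode 1) enode_cvg_1). }
  pose proof (is_series_tail _ _ (enode_gf_correct Q ltac:(lra))) as Htail.
  assert (Hdiff : is_series (fun j => enode j - enode (S j)) ((-1) * (enode_gf Q - Q ^ 0 * enode 0))).
  { apply (is_series_Rext (fun j => (-1) * (Q ^ S j * enode (S j)))); [|now apply is_series_Rscal].
    intros j. rewrite (enode_step j). ring. }
  pose proof (is_series_unique _ _ Htelescope). pose proof (is_series_unique _ _ Hdiff).
  simpl in *. lra.
Qed.

Lemma enode_gf_pow k : enode_gf (Q ^ S k) = (1 - Q) ^ k * qfact Q k.
Proof.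
  induction k as [|k IH]; [simpl; rewrite Rmult_1_r, enode_gf_Q; ring|].
  assert (0 < Q ^ S k) by (apply pow_lt; lra).
  assert (Q ^ S k <= Q) by (apply pow_le_base; [lra|lia]).
  replace (Q ^ S (S k)) with (Q ^ S k * Q) by (simpl; ring).
  rewrite enode_gf_mul_Q, IH, qfact_S by lra. unfold qint. simpl. field. lra.
Qed.

End QExpNodes.

(** * The q-Baskakov basis *)

(* [q^(k(k-1)/2) x^k] is [(x/(1-q))^k / [k]_q!] up to the factor [(q;q)_k <= 1],
   i.e. at most a term of the convergent series of [E_q(x/(1-q))]. *)
Lemma qtri_pow_cvg_0 q x : 0 < q < 1 -> 0 <= x -> is_lim_seq (fun k => qtri q k * x ^ k) 0.
Proof.
  intros Hq Hx.
  apply (is_lim_seq_le_le (fun _ => 0) _ (qexp_term q (x / (1 - q)))).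
  - intros k.
    assert (0 < qtri q k) by (apply qtri_pos; lra).
    assert (0 <= x ^ k) by (apply pow_le; lra).
    assert (0 < qfact q k) by (apply qfact_pos; lra).
    assert (0 < (1 - q) ^ k) by (apply pow_lt; lra).
    pose proof (qfact_pochhammer_le_1 q k Hq).
    assert (Hpoch : 0 < qfact q k * (1 - q) ^ k) by (apply Rmult_lt_0_compat; assumption).
    assert (0 <= qtri q k * x ^ k) by nra.
    split; [lra|]. unfold qexp_term.
    replace (qtri q k * (x / (1 - q)) ^ k / qfact q k)
      with (qtri q k * x ^ k / (qfact q k * (1 - q) ^ k))
      by (unfold Rdiv; rewrite Rpow_mult_distr, pow_inv; field; lra).
    apply (Rcomplements.Rle_div_r _ _ _ Hpoch). nra.
  - apply is_lim_seq_const.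
  - exact (ex_series_lim_0 _ (ex_series_qexp_term q _ Hq)).
Qed.

Section Baskakov.
Variables Q x : R.
Hypothesis HQ : 0 < Q < 1.
Hypothesis Hx : 0 <= x.

(* The basis [p_q Q n k x] with [n = m + 1], the binomial coefficient written out. *)
Definition bask (m k : nat) : R :=
  qfact Q (m + k) / (qfact Q k * qfact Q m) * qtri Q k * x ^ k / qpoch_plus Q x (S m + k).

Lemma p_q_bask m k : p_q Q (S m) k x = bask m k.
Proof.
  unfold p_q, bask, qbinom.
  replace (S m + k - 1)%nat with (m + k)%nat by lia.
  replace (m + k - k)%nat with m by lia. reflexivity.
Qed.

Lemma bask_nonneg m k : 0 <= bask m k.
Proof.
  unfold bask.
  assert (0 < qfact Q (m + k)) by (apply qfact_pos; lra).
  assert (0 < qfact Q k) by (apply qfact_pos; lra).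
  assert (0 < qfact Q m) by (apply qfact_pos; lra).
  assert (0 < qtri Q k) by (apply qtri_pos; lra).
  assert (0 <= x ^ k) by (apply pow_le; lra).
  assert (0 < qpoch_plus Q x (S m + k)) by (apply qpoch_plus_pos; lra).
  apply Rmult_le_pos; [|apply Rlt_le, Rinv_0_lt_compat; lra].
  apply Rmult_le_pos; [|lra]. apply Rmult_le_pos; [|lra].
  apply Rlt_le, Rdiv_lt_0_compat; [lra|nra].
Qed.

(* [1 - sum_(k <= K) bask m k = sum_(i <= m) bask_rem i K]; the identities [bask_*_*] below
   make this telescope. *)
Definition bask_rem (m K : nat) : R :=
  qfact Q (K + m) / (qfact Q K * qfact Q m) * qtri Q (S K) * Q ^ m * x ^ S K
  / qpoch_plus Q x (S K + m).

Lemma bask_0_0 : bask 0 0 = 1 - bask_rem 0 0.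
Proof. unfold bask, bask_rem, qtri. simpl. field. lra. Qed.

Lemma bask_0_S K : bask 0 (S K) = bask_rem 0 K - bask_rem 0 (S K).
Proof.
  unfold bask, bask_rem. rewrite !Nat.add_0_r, Nat.add_0_l.
  replace (S 0 + S K)%nat with (S (S K)) by lia.
  rewrite (qpoch_plus_S Q x (S K)), (qtri_S Q (S K)), (qfact_S Q K).
  assert (0 < qpoch_plus Q x (S K)) by (apply qpoch_plus_pos; lra).
  assert (0 < qfact Q K) by (apply qfact_pos; lra).
  assert (1 <= qint Q (S K)) by (apply qint_ge_1; [lra|lia]).
  assert (0 <= Q ^ S K * x) by (apply Rmult_le_pos; [apply pow_le|]; lra).
  simpl qfact. simpl pow in *. field. repeat split; lra.
Qed.

Lemma bask_S_0 m : bask (S m) 0 = bask m 0 - bask_rem (S m) 0.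
Proof.
  unfold bask, bask_rem. rewrite !Nat.add_0_r.
  replace (1 + S m)%nat with (S (S m)) by lia.
  rewrite (qpoch_plus_S Q x (S m)).
  assert (0 < qpoch_plus Q x (S m)) by (apply qpoch_plus_pos; lra).
  assert (0 < qfact Q m) by (apply qfact_pos; lra).
  assert (1 <= qint Q (S m)) by (apply qint_ge_1; [lra|lia]).
  assert (0 <= Q ^ S m * x) by (apply Rmult_le_pos; [apply pow_le|]; lra).
  unfold qtri. simpl qfact. simpl pow in *. field. repeat split; lra.
Qed.

Lemma bask_S_S m K :
  bask (S m) (S K) = bask m (S K) + bask_rem (S m) K - bask_rem (S m) (S K).
Proof.
  unfold bask, bask_rem.
  replace (S m + S K)%nat with (S (S (m + K))) by lia.
  replace (m + S K)%nat with (S (m + K)) by lia.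
  replace (K + S m)%nat with (S (m + K)) by lia.
  replace (S K + S m)%nat with (S (S (m + K))) by lia.
  replace (S (S m) + S K)%nat with (S (S (S (m + K)))) by lia.
  replace (S (S K) + S m)%nat with (S (S (S (m + K)))) by lia.
  rewrite (qpoch_plus_S Q x (S (S (m + K)))).
  rewrite (qfact_S Q (S (m + K))), (qfact_S Q K), (qfact_S Q m), (qtri_S Q (S K)).
  assert (0 < qpoch_plus Q x (S (S (m + K)))) by (apply qpoch_plus_pos; lra).
  assert (0 < qfact Q K) by (apply qfact_pos; lra).
  assert (0 < qfact Q m) by (apply qfact_pos; lra).
  assert (0 < qfact Q (S (m + K))) by (apply qfact_pos; lra).
  assert (1 <= qint Q (S K)) by (apply qint_ge_1; [lra|lia]).
  assert (1 <= qint Q (S m)) by (apply qint_ge_1; [lra|lia]).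
  assert (0 <= Q ^ S (S (m + K)) * x) by (apply Rmult_le_pos; [apply pow_le|]; lra).
  assert (0 < Q ^ m <= 1) by (split; [apply pow_lt|apply pow_le_1]; lra).
  assert (0 < Q ^ K <= 1) by (split; [apply pow_lt|apply pow_le_1]; lra).
  unfold qint in *. simpl pow in *. rewrite !pow_add in *.
  field. repeat split; try lra; nra.
Qed.

Lemma bask_partial_sum m K : sum_f_R0 (bask m) K = 1 - sum_f_R0 (fun i => bask_rem i K) m.
Proof.
  revert K. induction m as [|m IHm]; intros K.
  - induction K as [|K IHK]; simpl; [apply bask_0_0|].
    simpl in IHK. rewrite IHK, bask_0_S. ring.
  - induction K as [|K IHK].
    + simpl. rewrite bask_S_0. specialize (IHm 0%nat). simpl in IHm. rewrite IHm. ring.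
    + pose proof (IHm K). pose proof (IHm (S K)).
      simpl sum_f_R0 in *. rewrite IHK, bask_S_S. lra.
Qed.

Lemma bask_rem_le m K : 0 <= bask_rem m K <= / (1 - Q) ^ m * (qtri Q (S K) * x ^ S K).
Proof.
  unfold bask_rem.
  assert (0 < qfact Q (K + m)) by (apply qfact_pos; lra).
  assert (0 < qfact Q K) by (apply qfact_pos; lra).
  assert (1 <= qfact Q m) by (apply qfact_ge_1; lra).
  assert (0 < qtri Q (S K)) by (apply qtri_pos; lra).
  assert (0 < Q ^ m <= 1) by (split; [apply pow_lt|apply pow_le_1]; lra).
  assert (0 <= x ^ S K) by (apply pow_le; lra).
  assert (1 <= qpoch_plus Q x (S K + m)) by (apply qpoch_plus_ge_1; lra).
  pose proof (qfact_ratio_le Q K m HQ) as Hratio.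
  set (c := qtri Q (S K) * x ^ S K). assert (0 <= c) by (unfold c; nra).
  set (r := qfact Q (K + m) / qfact Q K) in *.
  assert (0 <= r) by (unfold r; apply Rlt_le, Rdiv_lt_0_compat; lra).
  set (s := Q ^ m / (qfact Q m * qpoch_plus Q x (S K + m))).
  replace (qfact Q (K + m) / (qfact Q K * qfact Q m) * qtri Q (S K) * Q ^ m * x ^ S K
    / qpoch_plus Q x (S K + m)) with (r * c * s) by (unfold r, c, s; field; repeat split; lra).
  assert (0 <= s <= 1).
  { assert (Hden : 1 <= qfact Q m * qpoch_plus Q x (S K + m)) by nra.
    unfold s. split; [apply Rlt_le, Rdiv_lt_0_compat; lra|].
    apply Rcomplements.Rle_div_l; [lra|nra]. }
  assert (r * c <= / (1 - Q) ^ m * c) by nra.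
  assert (0 <= r * c) by nra.
  split; nra.
Qed.

Lemma bask_is_series_1 m : is_series (bask m) 1.
Proof.
  assert (Hrem : forall i, is_lim_seq (fun K => bask_rem i K) 0).
  { intros i. apply (is_lim_seq_le_le (fun _ => 0) _
      (fun K => / (1 - Q) ^ i * (qtri Q (S K) * x ^ S K))); [apply bask_rem_le|apply is_lim_seq_const|].
    replace (Finite 0) with (Rbar_mult (/ (1 - Q) ^ i) 0) by (simpl; f_equal; ring).
    apply is_lim_seq_scal_l.
    exact (proj1 (is_lim_seq_incr_1 _ 0) (qtri_pow_cvg_0 Q x HQ Hx)). }
  apply is_series_of_partial_sums.
  apply (is_lim_seq_ext (fun K => 1 - sum_f_R0 (fun i => bask_rem i K) m));
    [intros K; symmetry; apply bask_partial_sum|].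
  replace (Finite 1) with (Finite (1 - 0)) by (f_equal; ring).
  apply is_lim_seq_minus'; [apply is_lim_seq_const|].
  induction m as [|m IH]; simpl; [apply Hrem|].
  replace (Finite 0) with (Finite (0 + 0)) by (f_equal; ring).
  apply is_lim_seq_plus'; [exact IH|apply Hrem].
Qed.

(* The q-analogues of [k] and [k (k - 1)] against which the basis has closed-form moments. *)
Definition fmom1 (k : nat) : R := Q * qint Q k / Q ^ k.
Definition fmom2 (k : nat) : R := Q ^ 2 * qint Q k * (qint Q k - 1) / (Q ^ k) ^ 2.

Lemma bask_mul_fmom1 m k : bask m (S k) * fmom1 (S k) = qint Q (S m) * x * bask (S m) k.
Proof.
  unfold bask, fmom1.
  replace (m + S k)%nat with (S (m + k)) by lia.
  replace (S m + k)%nat with (S (m + k)) by lia.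
  replace (S m + S k)%nat with (S (S (m + k))) by lia.
  replace (S (S m) + k)%nat with (S (S (m + k))) by lia.
  rewrite (qfact_S Q k), (qfact_S Q m), (qtri_S Q k).
  assert (0 < qpoch_plus Q x (S (S (m + k)))) by (apply qpoch_plus_pos; lra).
  assert (0 < qfact Q k) by (apply qfact_pos; lra).
  assert (0 < qfact Q m) by (apply qfact_pos; lra).
  assert (1 <= qint Q (S k)) by (apply qint_ge_1; [lra|lia]).
  assert (1 <= qint Q (S m)) by (apply qint_ge_1; [lra|lia]).
  assert (0 < Q ^ k) by (apply pow_lt; lra).
  simpl pow. field. repeat split; lra.
Qed.

Lemma bask_mul_fmom2 m k :
  bask m (S (S k)) * fmom2 (S (S k)) = qint Q (S m) * qint Q (S (S m)) * x ^ 2 * bask (S (S m)) k.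
Proof.
  unfold bask, fmom2.
  replace (m + S (S k))%nat with (S (S (m + k))) by lia.
  replace (S (S m) + k)%nat with (S (S (m + k))) by lia.
  replace (S m + S (S k))%nat with (S (S (S (m + k)))) by lia.
  replace (S (S (S m)) + k)%nat with (S (S (S (m + k)))) by lia.
  rewrite (qfact_S Q (S k)), (qfact_S Q k), (qfact_S Q (S m)), (qfact_S Q m),
    (qtri_S Q (S k)), (qtri_S Q k).
  assert (0 < qpoch_plus Q x (S (S (S (m + k))))) by (apply qpoch_plus_pos; lra).
  assert (0 < qfact Q k) by (apply qfact_pos; lra).
  assert (0 < qfact Q m) by (apply qfact_pos; lra).
  assert (1 <= qint Q (S k)) by (apply qint_ge_1; [lra|lia]).
  assert (1 <= qint Q (S m)) by (apply qint_ge_1; [lra|lia]).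
  assert (1 <= qint Q (S (S k))) by (apply qint_ge_1; [lra|lia]).
  assert (1 <= qint Q (S (S m))) by (apply qint_ge_1; [lra|lia]).
  assert (0 < Q ^ k) by (apply pow_lt; lra).
  replace (qint Q (S (S k)) - 1) with (Q * qint Q (S k)) by (rewrite (qint_S Q (S k)) by lra; ring).
  simpl pow. field. repeat split; lra.
Qed.

Lemma bask_moment1 m : is_series (fun k => bask m k * fmom1 k) (qint Q (S m) * x).
Proof.
  apply is_series_of_tail.
  replace (qint Q (S m) * x - bask m 0 * fmom1 0) with (qint Q (S m) * x * 1)
    by (unfold fmom1; rewrite qint_0; simpl; field).
  apply (is_series_Rext (fun k => qint Q (S m) * x * bask (S m) k));
    [intros k; rewrite bask_mul_fmom1; ring|].
  apply is_series_Rscal, bask_is_series_1.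
Qed.

Lemma bask_moment2 m :
  is_series (fun k => bask m k * fmom2 k) (qint Q (S m) * qint Q (S (S m)) * x ^ 2).
Proof.
  apply is_series_of_tail, is_series_of_tail.
  replace (qint Q (S m) * qint Q (S (S m)) * x ^ 2 - bask m 0 * fmom2 0 - bask m 1 * fmom2 1)
    with (qint Q (S m) * qint Q (S (S m)) * x ^ 2 * 1)
    by (unfold fmom2; rewrite qint_0, qint_1 by lra; simpl; field; lra).
  apply (is_series_Rext (fun k => qint Q (S m) * qint Q (S (S m)) * x ^ 2 * bask (S (S m)) k));
    [intros k; rewrite bask_mul_fmom2; ring|].
  apply is_series_Rscal, bask_is_series_1.
Qed.

End Baskakov.

(** * The q-Szasz weights of the Jackson integral *)

Section SzaszWeights.
Variable Q : R.
Hypothesis HQ : 0 < Q < 1.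

Definition szasz_w (k j : nat) : R := (Q ^ S k) ^ j * enode Q j / ((1 - Q) ^ k * qfact Q k).
Definition szasz_node (k j : nat) : R := node Q j / Q ^ k.
Definition szasz_mom1 (k : nat) : R := Q * qint Q (S k) / Q ^ k.
Definition szasz_mom2 (k : nat) : R := Q ^ 2 * qint Q (S k) * qint Q (S (S k)) / (Q ^ k) ^ 2.

Lemma enode_gf_pow_correct k :
  is_series (fun j => (Q ^ S k) ^ j * enode Q j) ((1 - Q) ^ k * qfact Q k).
Proof.
  rewrite <- (enode_gf_pow Q HQ k). apply enode_gf_correct; [exact HQ|].
  split; [apply pow_le; lra|].
  apply Rle_lt_trans with Q; [apply pow_le_base; [lra|lia]|lra].
Qed.

Lemma szasz_w_nonneg k j : 0 <= szasz_w k j.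
Proof.
  unfold szasz_w. pose proof (enode_pos Q HQ j).
  assert (0 < (Q ^ S k) ^ j) by (apply pow_lt, pow_lt; lra).
  assert (0 < (1 - Q) ^ k) by (apply pow_lt; lra).
  assert (0 < qfact Q k) by (apply qfact_pos; lra).
  apply Rlt_le, Rdiv_lt_0_compat; nra.
Qed.

Lemma szasz_w_is_series_1 k : is_series (szasz_w k) 1.
Proof.
  assert (0 < (1 - Q) ^ k) by (apply pow_lt; lra).
  assert (0 < qfact Q k) by (apply qfact_pos; lra).
  pose proof (is_series_Rscal (/ ((1 - Q) ^ k * qfact Q k)) _ _ (enode_gf_pow_correct k)) as Hs.
  rewrite Rinv_l in Hs by nra.
  refine (is_series_Rext _ _ _ _ Hs). intros j. unfold szasz_w. field. lra.
Qed.

Lemma szasz_moment1 k : is_series (fun j => szasz_w k j * szasz_node k j) (szasz_mom1 k).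
Proof.
  assert (0 < (1 - Q) ^ k) by (apply pow_lt; lra).
  assert (0 < qfact Q k) by (apply qfact_pos; lra).
  assert (0 < Q ^ k) by (apply pow_lt; lra).
  set (c := Q / (Q ^ k * (1 - Q) ^ S k * qfact Q k)).
  apply (is_series_Rext (fun j => c * ((Q ^ S (S k)) ^ j * enode Q j))).
  - intros j. unfold szasz_w, szasz_node, node, c. rewrite <- !pow_mult.
    replace (S (S k) * j)%nat with (S k * j + j)%nat by lia.
    replace (S j) with (j + 1)%nat by lia. rewrite !pow_add.
    assert (0 < Q ^ j) by (apply pow_lt; lra).
    simpl. field. repeat split; lra.
  - replace (szasz_mom1 k) with (c * ((1 - Q) ^ S k * qfact Q (S k))).
    + apply is_series_Rscal, enode_gf_pow_correct.
    + unfold c, szasz_mom1. rewrite qfact_S. simpl. field. repeat split; lra.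
Qed.

Lemma szasz_moment2 k : is_series (fun j => szasz_w k j * szasz_node k j ^ 2) (szasz_mom2 k).
Proof.
  assert (0 < (1 - Q) ^ k) by (apply pow_lt; lra).
  assert (0 < qfact Q k) by (apply qfact_pos; lra).
  assert (0 < Q ^ k) by (apply pow_lt; lra).
  set (c := Q ^ 2 / ((Q ^ k) ^ 2 * (1 - Q) ^ S (S k) * qfact Q k)).
  apply (is_series_Rext (fun j => c * ((Q ^ S (S (S k))) ^ j * enode Q j))).
  - intros j. unfold szasz_w, szasz_node, node, c. rewrite <- !pow_mult.
    replace (S (S (S k)) * j)%nat with (S k * j + j + j)%nat by lia.
    replace (S j) with (j + 1)%nat by lia. rewrite !pow_add.
    assert (0 < Q ^ j) by (apply pow_lt; lra).
    replace (Q ^ (k * 2)) with (Q ^ k * Q ^ k) by (rewrite <- pow_add; f_equal; lia).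
    simpl. field. repeat split; lra.
  - replace (szasz_mom2 k) with (c * ((1 - Q) ^ S (S k) * qfact Q (S (S k)))).
    + apply is_series_Rscal, enode_gf_pow_correct.
    + unfold c, szasz_mom2. rewrite !qfact_S. simpl. field. repeat split; lra.
Qed.

Lemma szasz_mom1_fmom1 k : szasz_mom1 k = Q + fmom1 Q k.
Proof.
  unfold szasz_mom1, fmom1. rewrite qint_S by lra.
  assert (0 < Q ^ k) by (apply pow_lt; lra).
  unfold qint. field. lra.
Qed.

Lemma szasz_mom2_fmom k :
  szasz_mom2 k = Q ^ 2 * (1 + Q) + (1 + Q) ^ 2 * fmom1 Q k + fmom2 Q k / Q.
Proof.
  unfold szasz_mom2, fmom1, fmom2. rewrite (qint_S Q (S k)), (qint_S Q k) by lra.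
  assert (0 < Q ^ k) by (apply pow_lt; lra).
  unfold qint. field. lra.
Qed.

End SzaszWeights.

(** * The second central moment of the operator *)

Section SecondMoment.
Variables Q N alpha beta x : R.
Hypothesis HQ : 0 < Q < 1.
Hypothesis HNb : 0 < N + beta.

Definition stancu_node (k j : nat) : R := (szasz_node Q k j + alpha) / (N + beta).

Definition szasz_dev2 (k : nat) : R :=
  (szasz_mom2 Q k + 2 * alpha * szasz_mom1 Q k + alpha ^ 2) / (N + beta) ^ 2
  - 2 * x * (szasz_mom1 Q k + alpha) / (N + beta) + x ^ 2.

Lemma szasz_dev2_correct k :
  is_series (fun j => szasz_w Q k j * (stancu_node k j - x) ^ 2) (szasz_dev2 k).
Proof.
  set (a := / (N + beta) ^ 2).
  set (b := 2 * alpha / (N + beta) ^ 2 - 2 * x / (N + beta)).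
  set (c := alpha ^ 2 / (N + beta) ^ 2 - 2 * x * alpha / (N + beta) + x ^ 2).
  apply (is_series_Rext (fun j => (a * (szasz_w Q k j * szasz_node Q k j ^ 2)
                                   + b * (szasz_w Q k j * szasz_node Q k j)) + c * szasz_w Q k j)).
  - intros j. unfold stancu_node, a, b, c. field. lra.
  - replace (szasz_dev2 k) with ((a * szasz_mom2 Q k + b * szasz_mom1 Q k) + c * 1)
      by (unfold szasz_dev2, a, b, c; field; lra).
    apply is_series_Rplus; [apply is_series_Rplus|]; apply is_series_Rscal.
    + now apply szasz_moment2.
    + now apply szasz_moment1.
    + now apply szasz_w_is_series_1.
Qed.

Variable m : nat.
Hypothesis Hx : 0 <= x.

Definition dev2 : R :=
  let N1 := qint Q (S m) in let N2 := qint Q (S (S m)) in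
  ((Q ^ 2 * (1 + Q) + (1 + Q) ^ 2 * (N1 * x) + N1 * N2 * x ^ 2 / Q)
   + 2 * alpha * (Q + N1 * x) + alpha ^ 2) / (N + beta) ^ 2
  - 2 * x * (Q + N1 * x + alpha) / (N + beta) + x ^ 2.

Lemma dev2_correct : is_series (fun k => bask Q x m k * szasz_dev2 k) dev2.
Proof.
  set (a0 := (Q ^ 2 * (1 + Q) + 2 * alpha * Q + alpha ^ 2) / (N + beta) ^ 2
             - 2 * x * (Q + alpha) / (N + beta) + x ^ 2).
  set (a1 := ((1 + Q) ^ 2 + 2 * alpha) / (N + beta) ^ 2 - 2 * x / (N + beta)).
  set (a2 := / Q / (N + beta) ^ 2).
  apply (is_series_Rext (fun k => (a0 * bask Q x m k + a1 * (bask Q x m k * fmom1 Q k))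
                                  + a2 * (bask Q x m k * fmom2 Q k))).
  - intros k. unfold szasz_dev2. rewrite szasz_mom1_fmom1, szasz_mom2_fmom by exact HQ.
    unfold a0, a1, a2. field. lra.
  - replace dev2 with ((a0 * 1 + a1 * (qint Q (S m) * x))
                       + a2 * (qint Q (S m) * qint Q (S (S m)) * x ^ 2))
      by (unfold dev2, a0, a1, a2; field; lra).
    apply is_series_Rplus; [apply is_series_Rplus|]; apply is_series_Rscal.
    + now apply bask_is_series_1.
    + now apply bask_moment1.
    + now apply bask_moment2.
Qed.

End SecondMoment.

(* Multiplied by [(N + beta)^2], [dev2] is a quadratic in [x] whose coefficients are at most
   [N] times those of [C (1 + x^2)]: the [N^2 x^2] terms cancel. *)
Lemma dev2_le Q alpha beta x m :
  / 2 <= Q < 1 -> 0 <= alpha -> 0 <= beta -> 0 <= x ->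
  dev2 Q (qint Q (S m)) alpha beta x m
  <= (8 + beta ^ 2 + 4 * alpha + alpha ^ 2) * (1 + x ^ 2) / qint Q (S m).
Proof.
  intros HQ Ha Hb Hx.
  set (N := qint Q (S m)).
  assert (HN : 1 <= N) by (apply qint_ge_1; [lra|lia]).
  set (C := (8 + beta ^ 2 + 4 * alpha + alpha ^ 2) * (1 + x ^ 2)).
  assert (HC : 0 <= C) by (unfold C; nra).
  set (D := (N + beta) ^ 2).
  assert (HD : N ^ 2 <= D) by (unfold D; nra).
  assert (E : dev2 Q N alpha beta x m * D
              = (N / Q + beta ^ 2) * x ^ 2
                + ((1 + Q) ^ 2 * N + 2 * alpha * N - 2 * (Q + alpha) * (N + beta)) * x
                + (Q ^ 2 * (1 + Q) + 2 * alpha * Q + alpha ^ 2)).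
  { unfold dev2, D. fold N. rewrite (qint_S Q (S m)) by lra. fold N. field. lra. }
  assert (Hnum : dev2 Q N alpha beta x m * D <= N * C).
  { rewrite E. unfold C.
    assert (HNQ : N / Q <= 2 * N) by (apply Rcomplements.Rle_div_l; nra).
    assert (0 <= x ^ 2) by nra.
    assert (x <= 1 + x ^ 2) by nra.
    assert (t2 : (N / Q + beta ^ 2) * x ^ 2 <= N * ((2 + beta ^ 2) * x ^ 2)).
    { assert (beta ^ 2 <= N * beta ^ 2) by nra. nra. }
    assert (t1 : ((1 + Q) ^ 2 * N + 2 * alpha * N - 2 * (Q + alpha) * (N + beta)) * x
                 <= N * ((4 + 2 * alpha) * (1 + x ^ 2))).
    { assert (0 <= 2 * (Q + alpha) * (N + beta) * x) by (repeat apply Rmult_le_pos; lra).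
      assert ((1 + Q) ^ 2 <= 4) by nra.
      assert (((1 + Q) ^ 2 * N + 2 * alpha * N) * x <= ((4 + 2 * alpha) * N) * x)
        by (apply Rmult_le_compat_r; nra).
      assert (((4 + 2 * alpha) * N) * x <= ((4 + 2 * alpha) * N) * (1 + x ^ 2))
        by (apply Rmult_le_compat_l; nra).
      nra. }
    assert (t0 : Q ^ 2 * (1 + Q) + 2 * alpha * Q + alpha ^ 2
                 <= N * ((2 + 2 * alpha + alpha ^ 2) * (1 + x ^ 2))).
    { assert (Q ^ 2 * (1 + Q) <= 2) by nra.
      assert (2 + 2 * alpha + alpha ^ 2 <= (2 + 2 * alpha + alpha ^ 2) * (1 + x ^ 2)) by nra.
      nra. }
    nra. }
  apply Rle_trans with (N * C / D).
  - apply Rcomplements.Rle_div_r; [unfold D; nra|exact Hnum].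
  - replace (C / N) with (N * C / N ^ 2) by (field; lra).
    unfold Rdiv. apply Rmult_le_compat_l; [nra|]. apply Rinv_le_contravar; nra.
Qed.

(** * The operator as a double weighted mean *)

Section Operator.
Variables (alpha beta Mf Q : R) (f : R -> R) (m : nat) (x : R).
Hypothesis HQ : 0 < Q < 1.
Hypothesis Halpha : 0 <= alpha.
Hypothesis Hbeta : 0 <= beta.
Hypothesis Hx : 0 <= x.
Hypothesis Hf : forall u, 0 <= u -> Rabs (f u) <= Mf.

Let N := qint Q (S m).

Lemma N_ge_1 : 1 <= N.
Proof. apply qint_ge_1; [lra|lia]. Qed.

Lemma one_minus_pow_pos : 0 < 1 - Q ^ S m.
Proof. assert (Q ^ S m <= Q) by (apply pow_le_base; [lra|lia]). lra. Qed.

Lemma N_mul_jackson_node j : N * (Q / (1 - Q ^ S m) * Q ^ j) = node Q j.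
Proof.
  unfold N, node, qint. pose proof one_minus_pow_pos. simpl in *. field. split; lra.
Qed.

Definition integrand (k : nat) (t : R) : R :=
  / Q ^ (k + 1) * s_q Q (S m) k t * f ((qint Q (S m) * t / Q ^ k + alpha) / (qint Q (S m) + beta)).

Lemma stancu_node_nonneg k j : 0 <= stancu_node Q N alpha beta k j.
Proof.
  unfold stancu_node, szasz_node. pose proof (node_pos Q HQ j). pose proof N_ge_1.
  assert (0 < Q ^ k) by (apply pow_lt; lra).
  assert (0 <= node Q j / Q ^ k) by (apply Rlt_le, Rdiv_lt_0_compat; lra).
  apply Rmult_le_pos; [lra|apply Rlt_le, Rinv_0_lt_compat; lra].
Qed.

Lemma integrand_at_node k j :
  Q * (integrand k (Q / (1 - Q ^ S m) * Q ^ j) * Q ^ j) = szasz_w Q k j * f (stancu_node Q N alpha beta k j).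
Proof.
  unfold integrand, s_q. fold N.
  rewrite N_mul_jackson_node, <- Ropp_mult_distr_l, N_mul_jackson_node.
  change (Eq_exp Q (- node Q j)) with (enode Q j).
  change ((node Q j / Q ^ k + alpha) / (N + beta)) with (stancu_node Q N alpha beta k j).
  unfold szasz_w, node. rewrite <- !pow_mult.
  assert (0 < Q ^ k) by (apply pow_lt; lra).
  assert (0 < Q ^ j) by (apply pow_lt; lra).
  assert (0 < (1 - Q) ^ k) by (apply pow_lt; lra).
  assert (0 < qfact Q k) by (apply qfact_pos; lra).
  unfold Rdiv. rewrite Rpow_mult_distr, pow_inv, <- pow_mult.
  replace (S k * j)%nat with (k * j + j)%nat by lia.
  replace (S j * k)%nat with (k * j + k)%nat by lia.
  rewrite !pow_add. simpl. field. repeat split; lra.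
Qed.

Definition szasz_mean (k : nat) : R :=
  Series (fun j => szasz_w Q k j * f (stancu_node Q N alpha beta k j)).

Lemma szasz_mean_correct k :
  is_series (fun j => szasz_w Q k j * f (stancu_node Q N alpha beta k j)) (szasz_mean k).
Proof.
  apply Series_correct, (ex_series_mul_bounded _ _ Mf).
  - apply szasz_w_nonneg, HQ.
  - exists 1. now apply szasz_w_is_series_1.
  - intros j. apply Hf, stancu_node_nonneg.
Qed.

Lemma szasz_mean_bound k : Rabs (szasz_mean k) <= Mf.
Proof.
  replace Mf with (Mf * 1) by ring.
  apply (is_series_abs_le _ (fun j => Mf * szasz_w Q k j) _ _ (szasz_mean_correct k)).
  - now apply is_series_Rscal, szasz_w_is_series_1.
  - intros j. pose proof (szasz_w_nonneg Q HQ k j). pose proof (Hf _ (stancu_node_nonneg k j)).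
    rewrite Rabs_mult, (Rabs_pos_eq (szasz_w Q k j)) by lra. nra.
Qed.

Lemma N_mul_jackson k : N * jackson Q (Q / (1 - Q ^ S m)) (integrand k) = szasz_mean k.
Proof.
  unfold jackson.
  assert (Hs : is_series (fun j => integrand k (Q / (1 - Q ^ S m) * Q ^ j) * Q ^ j) (/ Q * szasz_mean k)).
  { apply (is_series_Rext (fun j => / Q * (szasz_w Q k j * f (stancu_node Q N alpha beta k j)))).
    - intros j. rewrite <- integrand_at_node. field. lra.
    - apply is_series_Rscal, szasz_mean_correct. }
  rewrite (series_val_of_is_series _ _ Hs).
  unfold N, qint. pose proof one_minus_pow_pos. field. repeat split; lra.
Qed.

Lemma D_op_correct :
  is_series (fun k => bask Q x m k * szasz_mean k) (D_op alpha beta f Q (S m) x).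
Proof.
  pose proof N_ge_1.
  assert (Hex : ex_series (fun k => bask Q x m k * szasz_mean k)).
  { apply (ex_series_mul_bounded _ _ Mf); [apply bask_nonneg; lra| |apply szasz_mean_bound].
    exists 1. now apply bask_is_series_1. }
  assert (Hs : is_series (fun k => p_q Q (S m) k x * jackson Q (Q / (1 - Q ^ S m)) (integrand k))
                 (/ N * Series (fun k => bask Q x m k * szasz_mean k))).
  { apply (is_series_Rext (fun k => / N * (bask Q x m k * szasz_mean k))).
    - intros k. rewrite p_q_bask, <- (N_mul_jackson k). field. lra.
    - apply is_series_Rscal, Series_correct, Hex. }
  unfold D_op. unfold integrand in Hs. rewrite (series_val_of_is_series _ _ Hs). fold N.
  replace (N * (/ N * Series (fun k => bask Q x m k * szasz_mean k)))
    with (Series (fun k => bask Q x m k * szasz_mean k)) by (field; lra).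
  apply Series_correct, Hex.
Qed.

(* Both layers are probability weights, so a quadratic majorant of [|f u - f x|] passes to
   the operator through its second central moment. *)
Lemma D_op_dev_le (a b : R) :
  (forall u, 0 <= u -> Rabs (f u - f x) <= a + b * (u - x) ^ 2) ->
  Rabs (D_op alpha beta f Q (S m) x - f x) <= a + b * dev2 Q N alpha beta x m.
Proof.
  intros Hmaj. pose proof N_ge_1.
  apply (weighted_mean_dev_le (bask Q x m) szasz_mean (szasz_dev2 Q N alpha beta x));
    [apply bask_nonneg; lra|now apply bask_is_series_1|apply D_op_correct|apply dev2_correct; lra|].
  intros k.
  apply (weighted_mean_dev_le (szasz_w Q k) (fun j => f (stancu_node Q N alpha beta k j))
           (fun j => (stancu_node Q N alpha beta k j - x) ^ 2));
    [now apply szasz_w_nonneg|now apply szasz_w_is_series_1|apply szasz_mean_correct|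
     apply szasz_dev2_correct; lra|].
  intros j. apply Hmaj, stancu_node_nonneg.
Qed.

End Operator.

(** * Statistical convergence *)

Lemma indic_bounds (P : Prop) : 0 <= indic P <= 1.
Proof. unfold indic. destruct (excluded_middle_informative P); lra. Qed.

Lemma indic_le_or (P P1 P2 : Prop) : (P -> P1 \/ P2) -> indic P <= indic P1 + indic P2.
Proof.
  intros H. unfold indic.
  destruct (excluded_middle_informative P) as [h|h];
  destruct (excluded_middle_informative P1) as [h1|h1];
  destruct (excluded_middle_informative P2) as [h2|h2]; try lra.
  destruct (H h); tauto.
Qed.

Lemma density_zero_covered (K K1 K2 : nat -> Prop) :
  density_zero K1 -> density_zero K2 ->
  (forall n, (1 <= n)%nat -> K n -> K1 n \/ K2 n) -> density_zero K.
Proof.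
  unfold density_zero. intros H1 H2 Hcover.
  apply is_lim_seq_Reals in H1. apply is_lim_seq_Reals in H2. apply is_lim_seq_Reals.
  apply (is_lim_seq_le_le (fun _ => 0) _
    (fun n => sum_f_R0 (fun j => indic (K1 (S j))) (pred n) / INR n
              + sum_f_R0 (fun j => indic (K2 (S j))) (pred n) / INR n)).
  - intros n. assert (Hn : 0 <= / INR n).
    { destruct n; [simpl; rewrite Rinv_0; lra|apply Rlt_le, Rinv_0_lt_compat, lt_0_INR; lia]. }
    unfold Rdiv. split.
    + apply Rmult_le_pos; [|exact Hn]. apply cond_pos_sum. intros j. apply indic_bounds.
    + rewrite <- Rmult_plus_distr_r. apply Rmult_le_compat_r; [exact Hn|].
      rewrite <- sum_plus. apply sum_Rle. intros j _. apply indic_le_or, Hcover. lia.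
  - apply is_lim_seq_const.
  - replace (Finite 0) with (Finite (0 + 0)) by (f_equal; ring).
    apply is_lim_seq_plus'; assumption.
Qed.

(** * Approximation *)

(* Extend [f] from [[0, +oo)] by [f 0] to the left to apply Heine's theorem on [[0, B]]. *)
Lemma uniform_continuity_nonneg (f : R -> R) (B : R) :
  (forall x, 0 <= x -> limit1_in f (fun y => 0 <= y) (f x) x) ->
  forall e, 0 < e -> exists d, 0 < d /\
    forall x y, 0 <= x <= B -> 0 <= y <= B -> Rabs (y - x) < d -> Rabs (f y - f x) < e.
Proof.
  intros Hc e He.
  set (g := fun y => f (Rmax 0 y)).
  assert (Hg : forall x, 0 <= x <= B -> continuous g x).
  { intros x Hx. apply continuity_pt_filterlim.
    intros eps Heps. destruct (Hc x (proj1 Hx) eps Heps) as [alp [Halp Hal]].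
    exists alp. split; [exact Halp|]. intros y [_ Hy].
    unfold g. rewrite (Rmax_right 0 x) by lra.
    apply Hal. split; [apply Rmax_l|].
    simpl in *. unfold R_dist in *.
    assert (Rabs (Rmax 0 y - x) <= Rabs (y - x)).
    { unfold Rmax. destruct (Rle_dec 0 y); [lra|]. rewrite !Rabs_left1 by lra. lra. }
    lra. }
  destruct (unifcont_normed_1d g 0 B Hg (mkposreal e He)) as [d Hd].
  exists d. split; [apply cond_pos|].
  intros x y Hx Hy Hxy.
  pose proof (Hd x y Hx Hy Hxy) as Hball.
  unfold g in Hball. rewrite (Rmax_right 0 x), (Rmax_right 0 y) in Hball by lra. exact Hball.
Qed.

Lemma bounded_dev_le (f : R -> R) Mf u x :
  (forall u, 0 <= u -> Rabs (f u) <= Mf) -> 0 <= u -> 0 <= x -> Rabs (f u - f x) <= 2 * Mf.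
Proof.
  intros Hf Hu Hx. unfold Rminus.
  apply Rle_trans with (Rabs (f u) + Rabs (- f x)); [apply Rabs_triang|].
  rewrite Rabs_Ropp. pose proof (Hf u Hu). pose proof (Hf x Hx). lra.
Qed.

(* Within [d] of [x] use uniform continuity; farther away, [2 Mf <= (2 Mf / d^2) (u - x)^2]. *)
Lemma quadratic_majorant (f : R -> R) Mf B d e x :
  (forall u, 0 <= u -> Rabs (f u) <= Mf) -> 0 < d <= 1 -> 0 <= e -> 0 <= x <= B ->
  (forall u y, 0 <= u <= B + 1 -> 0 <= y <= B + 1 -> Rabs (y - u) < d -> Rabs (f y - f u) < e) ->
  forall u, 0 <= u -> Rabs (f u - f x) <= e + 2 * Mf / d ^ 2 * (u - x) ^ 2.
Proof.
  intros Hf Hd He Hx Hcont u Hu.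
  assert (HMf : 0 <= Mf) by (pose proof (Hf 0 (Rle_refl 0)); pose proof (Rabs_pos (f 0)); lra).
  assert (Hb : 0 <= 2 * Mf / d ^ 2) by (apply Rcomplements.Rdiv_le_0_compat; nra).
  assert (0 <= 2 * Mf / d ^ 2 * (u - x) ^ 2) by (apply Rmult_le_pos; [lra|apply pow2_ge_0]).
  destruct (Rlt_or_le (Rabs (u - x)) d) as [Hnear|Hfar].
  - assert (Rabs (f u - f x) < e) by (apply Hcont; try lra; apply Rabs_def2 in Hnear; lra).
    lra.
  - pose proof (bounded_dev_le f Mf u x Hf Hu (proj1 Hx)).
    assert (d ^ 2 <= (u - x) ^ 2).
    { rewrite <- (pow2_abs (u - x)). pose proof (Rabs_pos (u - x)). nra. }
    assert (2 * Mf / d ^ 2 * d ^ 2 = 2 * Mf) by (field; lra).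
    assert (2 * Mf / d ^ 2 * d ^ 2 <= 2 * Mf / d ^ 2 * (u - x) ^ 2)
      by (apply Rmult_le_compat_l; lra).
    lra.
Qed.

Section Rho0Estimate.
Variables (alpha beta Mf Q B d eps : R) (f : R -> R) (m : nat).
Hypothesis HQ : / 2 <= Q < 1.
Hypothesis Halpha : 0 <= alpha.
Hypothesis Hbeta : 0 <= beta.
Hypothesis Heps : 0 < eps.
Hypothesis Hd : 0 < d <= 1.
Hypothesis Hf : forall u, 0 <= u -> Rabs (f u) <= Mf.
Hypothesis Hcont : forall u y, 0 <= u <= B + 1 -> 0 <= y <= B + 1 -> Rabs (y - u) < d ->
  Rabs (f y - f u) < eps / 4.
Hypothesis HB : 8 * Mf <= eps * B.
Hypothesis HN : 4 * (2 * Mf / d ^ 2) * (8 + beta ^ 2 + 4 * alpha + alpha ^ 2)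
                <= eps * qint Q (S m).

Lemma D_op_dev_near x : 0 <= x <= B ->
  Rabs (D_op alpha beta f Q (S m) x - f x) <= eps / 2 * (1 + x ^ 2).
Proof.
  intros Hx.
  assert (HMf : 0 <= Mf) by (pose proof (Hf 0 (Rle_refl 0)); pose proof (Rabs_pos (f 0)); lra).
  pose proof (D_op_dev_le alpha beta Mf Q f m x ltac:(lra) Halpha Hbeta (proj1 Hx) Hf (eps / 4)
    _ (quadratic_majorant f Mf B d (eps / 4) x Hf Hd ltac:(lra) Hx Hcont)) as Hdev.
  pose proof (dev2_le Q alpha beta x m HQ Halpha Hbeta (proj1 Hx)) as Hdev2.
  set (b := 2 * Mf / d ^ 2) in *. set (C := 8 + beta ^ 2 + 4 * alpha + alpha ^ 2) in *.
  set (N := qint Q (S m)) in *.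
  assert (HNpos : 1 <= N) by (apply qint_ge_1; [lra|lia]).
  assert (Hb : 0 <= b) by (apply Rcomplements.Rdiv_le_0_compat; nra).
  assert (Hsq : 0 <= x ^ 2) by nra.
  assert (b * dev2 Q N alpha beta x m <= b * C / N * (1 + x ^ 2)).
  { replace (b * C / N * (1 + x ^ 2)) with (b * (C * (1 + x ^ 2) / N)) by (field; lra).
    apply Rmult_le_compat_l; lra. }
  assert (b * C / N <= eps / 4) by (apply Rcomplements.Rle_div_l; lra).
  assert (b * C / N * (1 + x ^ 2) <= eps / 4 * (1 + x ^ 2)) by (apply Rmult_le_compat_r; lra).
  nra.
Qed.

Lemma D_op_dev_far x : B < x ->
  Rabs (D_op alpha beta f Q (S m) x - f x) <= eps / 2 * (1 + x ^ 2).
Proof.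
  intros Hx.
  assert (HMf : 0 <= Mf) by (pose proof (Hf 0 (Rle_refl 0)); pose proof (Rabs_pos (f 0)); lra).
  assert (0 <= x) by nra.
  assert (Hmaj : forall u, 0 <= u -> Rabs (f u - f x) <= 2 * Mf + 0 * (u - x) ^ 2).
  { intros u Hu. rewrite Rmult_0_l, Rplus_0_r. now apply bounded_dev_le. }
  pose proof (D_op_dev_le alpha beta Mf Q f m x ltac:(lra) Halpha Hbeta ltac:(lra) Hf
                (2 * Mf) 0 Hmaj) as Hdev.
  rewrite Rmult_0_l, Rplus_0_r in Hdev.
  assert (eps * B <= eps * x) by (apply Rmult_le_compat_l; lra).
  nra.
Qed.

Lemma D_op_rho0_lt : rho0_norm_lt (fun x => D_op alpha beta f Q (S m) x - f x) eps.
Proof.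
  exists (eps / 2). split; [lra|]. intros x Hx.
  assert (Hw : 0 < 1 + x ^ 2) by nra.
  apply Rcomplements.Rle_div_l; [exact Hw|].
  destruct (Rle_or_lt x B); [apply D_op_dev_near|apply D_op_dev_far]; lra.
Qed.

End Rho0Estimate.

Theorem theorem3 (alpha beta a : R) (q : nat -> R) (f : R -> R) :
  0 <= alpha -> alpha <= beta ->
  (forall n, 0 < q n < 1) ->
  st_cv q 1 ->
  st_cv (fun n => q n ^ n) a -> a < 1 ->
  st_cv (fun n => 1 / qint (q n) n) 0 ->
  bounded_cont_nonneg f ->
  forall eps, eps > 0 ->
    density_zero (fun n =>
      ~ rho0_norm_lt (fun x => D_op alpha beta f (q n) n x - f x) eps).
Proof.
  intros Halpha Hab Hq Hq1 _ _ Hqint [[Mf Hf] Hc] eps Heps.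
  assert (HMf : 0 <= Mf) by (pose proof (Hf 0 (Rle_refl 0)); pose proof (Rabs_pos (f 0)); lra).
  set (B := 8 * Mf / eps).
  destruct (uniform_continuity_nonneg f (B + 1) Hc (eps / 4)) as [d0 [Hd0 Hcont]]; [lra|].
  set (d := Rmin d0 1).
  assert (Hd : 0 < d <= 1) by (split; [apply Rmin_pos|apply Rmin_r]; lra).
  assert (Hdd0 : d <= d0) by apply Rmin_l.
  set (K := 4 * (2 * Mf / d ^ 2) * (8 + beta ^ 2 + 4 * alpha + alpha ^ 2)).
  assert (HK : 0 <= K).
  { assert (0 <= 2 * Mf / d ^ 2) by (apply Rcomplements.Rdiv_le_0_compat; nra).
    unfold K. nra. }
  set (N0 := K / eps + 1).
  assert (HN0 : 0 < N0) by (pose proof (Rcomplements.Rdiv_le_0_compat K eps HK Heps); unfold N0; lra).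
  apply (density_zero_covered _ (fun n => Rabs (q n - 1) >= / 2)
                                (fun n => Rabs (1 / qint (q n) n - 0) >= / N0));
    [apply Hq1; lra|apply Hqint, Rinv_0_lt_compat; lra|].
  intros [|m] Hm Hbad; [lia|].
  destruct (Rlt_or_le (Rabs (q (S m) - 1)) (/ 2)) as [Hnear1|]; [|left; lra].
  destruct (Rlt_or_le (Rabs (1 / qint (q (S m)) (S m) - 0)) (/ N0)) as [Hlarge|]; [|right; lra].
  exfalso. apply Hbad.
  pose proof (Hq (S m)). apply Rabs_def2 in Hnear1.
  assert (HN : 1 <= qint (q (S m)) (S m)) by (apply qint_ge_1; [lra|lia]).
  rewrite Rminus_0_r, Rabs_pos_eq in Hlarge by (apply Rlt_le, Rdiv_lt_0_compat; lra).
  assert (HN0N : N0 < qint (q (S m)) (S m)).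
  { apply Rinv_lt_cancel; [lra|]. unfold Rdiv in Hlarge. now rewrite Rmult_1_l in Hlarge. }
  apply (D_op_rho0_lt alpha beta Mf (q (S m)) B d eps); try lra; try assumption.
  - intros u y Hu Hy Huy. apply Hcont; lra.
  - unfold B. apply Req_le. field. lra.
  - change (K <= eps * qint (q (S m)) (S m)).
    replace K with (eps * (K / eps)) by (field; lra).
    apply Rmult_le_compat_l; unfold N0 in HN0N; lra.
Qed.
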